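(* Let $G$ be a cyclic group of odd order which is not a prime power. Then the power graph $\mathscr{G}(G)$ is not overfull.
   Context: For a finite group $G$, the power graph $\mathscr{G}(G)$ is the simple graph with vertex set the elements of $G$, in which two distinct elements $a,b$ are adjacent if and only if one is a power of the other. For a finite simple graph $\Gamma$ on $n$ vertices with maximum vertex degree $\Delta(\Gamma)$, $\Gamma$ is called overfull if $|E(\Gamma)| / \lfloor n/2 \rfloor > \Delta(\Gamma)$. *)

From mathcomp Require Import all_boot all_order all_algebra all_fingroup all_solvable.
Set Implicit Arguments. Unset Strict Implicit. Unset Printing Implicit Defensive.
Import GRing.Theory Num.Theory.

Section PowerGraph.
Variable gT : finGroupType.
Variable G : {group gT}.

Definition pg_adj (a b : gT) : bool :=
  (a != b) && ((a \in <[b]>%g) || (b \in <[a]>%g)).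

Definition pg_edges : {set {set gT}} :=
  [set E : {set gT} | [exists a in G, exists b in G, pg_adj a b && (E == [set a; b])]].

Definition pg_deg (a : gT) : nat := #|[set b in G | pg_adj a b]|.

Definition pg_maxdeg : nat := \max_(a in G) pg_deg a.

Definition pg_overfull : bool :=
  (pg_maxdeg%:R < (#|pg_edges|)%:R / ((#|G|)./2)%:R :> rat)%R.
End PowerGraph.

From mathcomp Require Import all_boot all_order all_algebra all_fingroup all_solvable.
From mathcomp Require Import zify.

Import GRing.Theory Num.Theory.

Set Implicit Arguments.
Unset Strict Implicit.
Unset Printing Implicit Defensive.

(* The identity is adjacent to every other element, so Delta = n - 1 where
   n = |G|; overfullness thus needs more than (n - 1) * floor(n/2) edges, i.e.
   fewer than floor(n/2) non-edges when n is odd.  A cyclic group is solvable,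
   so for p the least prime divisor of n it has a Hall p-subgroup S and a Hall
   p'-subgroup H.  Since S and H intersect trivially and every power of an
   element stays in its subgroup, no nontrivial element of S is adjacent to a
   nontrivial element of H, which gives (|S| - 1)(|H| - 1) non-edges; this is
   at least floor(n/2) = (|S||H| - 1)/2 because |S|, |H| >= 3 (odd, and
   different from 1 since n is not a prime power). *)

Section CrossPairs.
Variable T : finType.

Lemma eq_set2_cases (a b x y : T) :
  [set a; b] = [set x; y] -> (a = x /\ b = y) \/ (a = y /\ b = x) \/ (a = b /\ x = y).
Proof.
move=> eab.
have : x \in [set a; b] by rewrite eab !inE eqxx.
have : y \in [set a; b] by rewrite eab !inE eqxx orbT.
have : a \in [set x; y] by rewrite -eab !inE eqxx.
have : b \in [set x; y] by rewrite -eab !inE eqxx orbT.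
by rewrite !inE => /orP[]/eqP eb /orP[]/eqP ea /orP[]/eqP ey /orP[]/eqP ex;
  subst; tauto.
Qed.

Definition cross_pairs (A B : {set T}) : {set {set T}} :=
  [set [set u.1; u.2] | u in setX A B].

Lemma card_cross_pairs (A B : {set T}) :
  [disjoint A & B] -> #|cross_pairs A B| = #|A| * #|B|.
Proof.
move=> dAB; rewrite card_in_imset ?cardsX // => -[x1 y1] [x2 y2] /=.
rewrite !inE /= => /andP[x1A y1B] /andP[x2A y2B].
have neqAB x y : x \in A -> y \in B -> x <> y.
  by move=> xA yB exy; rewrite exy in xA; rewrite (disjointFr dAB xA) in yB.
case/eq_set2_cases=> [[-> ->] | [[ex ey] | [ex _]]] //.
- by case: (neqAB _ _ x1A y2B ex).
- by case: (neqAB _ _ x1A y1B ex).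
Qed.

End CrossPairs.

Section PowerGraphBounds.
Variables (gT : finGroupType) (G : {group gT}).

Lemma pg_adjC (a b : gT) : pg_adj a b = pg_adj b a.
Proof. by rewrite /pg_adj eq_sym orbC. Qed.

Lemma pg_edges_sub_draws :
  pg_edges G \subset [set E : {set gT} | E \subset G & #|E| == 2].
Proof.
apply/subsetP=> E; rewrite !inE => /exists_inP[a aG /exists_inP[b bG]].
case/andP=> /andP[nab _] /eqP->; rewrite cards2 nab andbT.
by apply/subsetP=> z; rewrite !inE => /orP[]/eqP->.
Qed.

Lemma disjoint_pg_edges_cross_pairs (A B : {set gT}) :
  {in A & B, forall x y, ~~ pg_adj x y} -> [disjoint pg_edges G & cross_pairs A B].
Proof.
move=> nadj; apply/pred0P=> E /=; apply/negbTE; apply/andP=> -[].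
rewrite inE => /exists_inP[a _ /exists_inP[b _ /andP[adj /eqP->]]].
case/imsetP=> -[x y]; rewrite inE /= => /andP[xA yB] eab.
move: adj; case/eq_set2_cases: eab => [[-> ->] | [[-> ->] | [-> _]]].
- exact/negP/nadj.
- by rewrite pg_adjC; apply/negP/nadj.
- by rewrite /pg_adj eqxx.
Qed.

Lemma leq_card_pg_edges_cross (A B : {set gT}) :
  A \subset G -> B \subset G -> [disjoint A & B] ->
  {in A & B, forall x y, ~~ pg_adj x y} ->
  #|pg_edges G| + #|A| * #|B| <= 'C(#|G|, 2).
Proof.
move=> sAG sBG dAB nadj; rewrite -card_cross_pairs // -cards_draws.
have [_] := leq_card_setU (pg_edges G) (cross_pairs A B).
rewrite disjoint_pg_edges_cross_pairs // => /eqP <-; apply/subset_leq_card.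
rewrite subUset pg_edges_sub_draws /=.
apply/subsetP=> E /imsetP[[x y]]; rewrite inE /= => /andP[xA yB] ->.
have nxy : x != y by apply: contraTneq xA => ->; rewrite (disjointFl dAB yB).
rewrite !inE cards2 nxy andbT.
by apply/subsetP=> z; rewrite !inE => /orP[]/eqP->;
  [apply: (subsetP sAG) | apply: (subsetP sBG)].
Qed.

Lemma pg_deg1 : pg_deg G 1 = #|G|.-1.
Proof.
rewrite /pg_deg (cardsD1 1%g G) group1 add1n /=; apply: eq_card => b.
by rewrite !inE /pg_adj group1 orTb andbT andbC eq_sym.
Qed.

Lemma pg_maxdeg_ge : #|G|.-1 <= pg_maxdeg G.
Proof. by rewrite -pg_deg1; apply: (leq_bigmax_cond _ (group1 G)). Qed.

Lemma pg_overfullE :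
  0 < #|G|./2 -> pg_overfull G = (pg_maxdeg G * #|G|./2 < #|pg_edges G|).
Proof.
by move=> k_gt0; rewrite /pg_overfull ltr_pdivlMr ?ltr0n // -natrM ltr_nat.
Qed.

Lemma pg_nadj_coprime (S H : {group gT}) :
  coprime #|S| #|H| -> {in S :\ 1 & H :\ 1, forall x y, ~~ pg_adj x y}%g.
Proof.
move=> coSH x y; rewrite !inE => /andP[x1 xS] /andP[y1 yH].
have TI z : z \in S -> z \in H -> z = 1%g.
  by move=> zS zH; apply/set1gP; rewrite -(coprime_TIg coSH) inE zS.
rewrite /pg_adj negb_and negbK negb_or.
have sYH : <[y]>%g \subset H by rewrite cycle_subG.
have sXS : <[x]>%g \subset S by rewrite cycle_subG.
case: eqP => //= _; apply/andP; split; apply/negP.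
- by move/(subsetP sYH)/(TI x xS); apply/eqP.
- by move/(subsetP sXS)/TI => /(_ yH); apply/eqP.
Qed.

Lemma pg_not_overfull_coprime (S H : {group gT}) :
  S \subset G -> H \subset G -> coprime #|S| #|H| ->
  #|G|./2 <= #|S|.-1 * #|H|.-1 -> ~~ pg_overfull G.
Proof.
move=> sSG sHG coSH half_le; set n := #|G| in half_le *; set k := n./2 in half_le *.
have [k0 | k_gt0] := posnP k.
  (* here the quotient in [pg_overfull] is a division by 0, hence 0 *)
  by rewrite /pg_overfull -/n -/k k0 invr0 mulr0 ltrn0.
rewrite pg_overfullE // -leqNgt.
have cardD1 (K : {group gT}) : #|K :\ 1%g| = #|K|.-1.
  by rewrite (cardsD1 1%g K) group1.
have dSH : [disjoint S :\ 1%g & H :\ 1%g].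
  by rewrite -setI_eq0 -setDIl coprime_TIg // setDv.
have := leq_card_pg_edges_cross (subset_trans (subsetDl _ _) sSG)
  (subset_trans (subsetDl _ _) sHG) dSH (pg_nadj_coprime coSH).
rewrite !cardD1 => edges_le.
have bin2_le : 'C(n, 2) <= n * k by rewrite bin2; nia.
have : #|pg_edges G| + k <= n.-1 * k + k.
  rewrite -mulSnr prednK ?cardG_gt0 //; apply: leq_trans bin2_le.
  by apply: leq_trans edges_le; rewrite leq_add2l.
rewrite leq_add2r => /leq_trans; apply.
by rewrite leq_mul2r pg_maxdeg_ge orbT.
Qed.

End PowerGraphBounds.

Lemma odd_prime_power_parts n :
  odd n -> ~ (exists p k, prime p /\ n = p ^ k) ->
  2 < n`_(pdiv n) /\ 2 < n`_(pdiv n)^'.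
Proof.
move=> odd_n not_pp; set p := pdiv n.
have n_gt1 : 1 < n.
  case: n odd_n not_pp @p => [|[|n]] // _ not_pp _.
  by case: not_pp; exists 2, 0.
have odd_part pi : odd n`_pi := dvdn_odd (dvdn_part pi n) odd_n.
have odd_gt2 m : odd m -> 1 < m -> 2 < m by lia.
split; apply: odd_gt2 => //.
  by rewrite p_part_gt1 pi_pdiv.
rewrite ltn_neqAle part_gt0 andbT eq_sym; apply/eqP=> p'part1.
case: not_pp; exists p, (logn p n); split; first exact: pdiv_prime.
by rewrite -p_part -{1}(partnC p (ltnW n_gt1)) p'part1 muln1.
Qed.

Lemma pg_not_overfull_solvable (gT : finGroupType) (G : {group gT}) :
  solvable G -> odd #|G| -> ~ (exists p k, prime p /\ #|G| = p ^ k) ->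
  ~~ pg_overfull G.
Proof.
move=> solG oddG not_pp; set p := pdiv #|G|.
have [S hallS] := Hall_exists p solG.
have [H hallH] := Hall_exists p^' solG.
have [cardS cardH] := (card_Hall hallS, card_Hall hallH).
apply: pg_not_overfull_coprime (pHall_sub hallS) (pHall_sub hallH) _ _.
  by rewrite cardS cardH coprime_partC.
have [S_gt2 H_gt2] := odd_prime_power_parts oddG not_pp.
have half_le a b : 2 < a -> 2 < b -> (a * b)./2 <= a.-1 * b.-1 by nia.
by rewrite cardS cardH -{1}(partnC p (cardG_gt0 G)) half_le.
Qed.

Theorem mainTheorem7 (gT : finGroupType) (G : {group gT}) :
  cyclic G -> odd #|G| ->
  ~ (exists p k : nat, prime p /\ #|G| = p ^ k) ->
  ~~ pg_overfull G.
Proof.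
by move=> cycG; apply: pg_not_overfull_solvable; exact/abelian_sol/cyclic_abelian.
Qed.
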